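(* Let $m\ge2$ be an integer and let $A$ be a left brace with $A^{(3)}=A^{m+1}=\{0\}$. Let $a\in A$, define $a_1=a$ and $a_{j+1}=a*a_j$ for $j\ge1$, and let $S$ be the subbrace of $A$ generated by $a$. For $1\le r\le m$ let \[S_r=\Bigl\{\sum_{k=r}^m t_ka_k\;\Big|\; t_k\in\mathbb{Z},\ r\le k\le m\Bigr\}.\] Then $S^r=S_r$ for all $1\le r\le m$, and $S^r=\{0\}$ for $r\ge m+1$. Here $S^r$ is computed inside the left brace $S$.
   Context: A left brace $(A,+,\cdot)$ is a set $A$ with two binary operations such that $(A,+)$ is an abelian group, $(A,\cdot)$ is a group, and $a(b+c)=ab-a+ac$ for all $a,b,c\in A$. In a left brace, $a*b=-a+ab-b$. For subsets $L,M\subseteq A$, $L*M$ is the subgroup of $(A,+)$ generated by $\{l*m\mid l\in L,m\in M\}$. Set $A^{(1)}=A$, $A^{(r+1)}=A^{(r)}*A$, and $A^1=A$, $A^{r+1}=A*A^r$ for $r\ge1$. A subbrace is a subset that is a subgroup of both $(A,+)$ and $(A,\cdot)$ (hence itself a left brace); the subbrace generated by $a$ is the intersection of all subbraces containing $a$. *)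

From HB Require Import structures.
From mathcomp Require Import all_boot all_order all_algebra.
Set Implicit Arguments. Unset Strict Implicit. Unset Printing Implicit Defensive.
Import GRing.Theory.
Local Open Scope ring_scope.

Record left_brace (A : zmodType) := LeftBrace {
  bmul : A -> A -> A;
  bid : A;
  binv : A -> A;
  bmulA : forall x y z, bmul x (bmul y z) = bmul (bmul x y) z;
  bmul1x : forall x, bmul bid x = x;
  bmulx1 : forall x, bmul x bid = x;
  bmulVx : forall x, bmul (binv x) x = bid;
  bmulxV : forall x, bmul x (binv x) = bid;
  bdistr : forall a b c, bmul a (b + c) = bmul a b - a + bmul a c
}.

Section Brace.
Variables (A : zmodType) (B : left_brace A).

Definition bstar (a b : A) : A := - a + bmul B a b - b.

Inductive addgen (X : A -> Prop) : A -> Prop :=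
  | addgen_gen x : X x -> addgen X x
  | addgen_0 : addgen X 0
  | addgen_sub x y : addgen X x -> addgen X y -> addgen X (x - y).

Definition starset (L M : A -> Prop) : A -> Prop :=
  addgen (fun x => exists l m, L l /\ M m /\ x = bstar l m).

Definition fullset : A -> Prop := fun _ => True.

(* right series A^(r) (r >= 1; index 0 is the same as 1 by convention) *)
Fixpoint rser (n : nat) : A -> Prop :=
  match n with
  | 0 => fullset
  | 1 => fullset
  | S ((S _) as k) => starset (rser k) fullset
  end.

(* left series of the sub-brace T (T^1 = T, T^(r+1) = T * T^r),
   computed inside T; T = fullset gives A^r *)
Fixpoint lser (T : A -> Prop) (n : nat) : A -> Prop :=
  match n with
  | 0 => T
  | 1 => T
  | S ((S _) as k) => starset T (lser T k)
  end.

Definition is_subbrace (T : A -> Prop) : Prop :=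
  T 0 /\ (forall x y, T x -> T y -> T (x - y)) /\
  T (bid B) /\ (forall x y, T x -> T y -> T (bmul B x y)) /\
  (forall x, T x -> T (binv B x)).

Definition gen_subbrace (a : A) : A -> Prop :=
  fun x => forall T, is_subbrace T -> T a -> T x.

(* a_1 = a, a_(j+1) = a * a_j  (index 0 is junk, equal to a) *)
Fixpoint aseq (a : A) (n : nat) : A :=
  match n with
  | 0 => a
  | 1 => a
  | S ((S _) as k) => bstar a (aseq a k)
  end.

Definition Sr (a : A) (m r : nat) : A -> Prop :=
  fun x => exists t : nat -> int, x = \sum_(r <= k < m.+1) (aseq a k) *~ t k.

End Brace.

From mathcomp Require Import all_boot all_order all_algebra.
Import GRing.Theory.
Set Implicit Arguments. Unset Strict Implicit. Unset Printing Implicit Defensive.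
Local Open Scope ring_scope.

(* Write lambda_x(y) = -x + xy, so that x*y = lambda_x(y) - y.  In any left
   brace lambda_x is an additive automorphism and x |-> lambda_x turns the
   brace product into composition.  If moreover A^(3) = 0 then every lambda_(x*y)
   is the identity, and from this x |-> lambda_x is also additive:
   lambda_(x+y) = lambda_x o lambda_y.

   Let V_r be the Z-span of a_r, ..., a_m (the set S_r of the statement); the
   a_k vanish for k > m because a_k lies in A^k.  The heart of the proof is
   that lambda_(na) - id maps V_r into V_(r+1) for every integer n: for
   n = 1 this is y |-> a*y, for n = -1 it follows from a downward induction
   on the a_k, and the general case by iteration, using additivity of lambda.
   Since every x in V_1 acts as lambda_(na) for some n, this shows that V_1 is
   a subbrace, hence equals the subbrace S generated by a, and that
   V_1 * V_r = V_(r+1); an induction on r then computes S^r = V_r. *)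

Section LambdaMap.
Variables (A : zmodType) (B : left_brace A).

Local Notation mul := (bmul B).

Definition lam (x y : A) : A := - x + mul x y.

(* Taking b = c = 0 in the brace axiom gives a0 = a. *)
Lemma mulx0 x : mul x 0 = x.
Proof.
have := bdistr B x 0 0; rewrite addr0 => h.
apply/eqP; rewrite -subr_eq0; apply/eqP; apply: (addIr (mul x 0)).
by rewrite add0r -h.
Qed.

Lemma bid0 : bid B = 0.
Proof. by rewrite -[RHS](bmul1x B) mulx0. Qed.

Lemma lamD x y z : lam x (y + z) = lam x y + lam x z.
Proof. by rewrite /lam bdistr !addrA. Qed.

Lemma lam0 x : lam x 0 = 0.
Proof. by rewrite /lam mulx0 addNr. Qed.

Lemma lamN x y : lam x (- y) = - lam x y.
Proof. by apply/eqP; rewrite -addr_eq0 -lamD addNr lam0. Qed.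

Lemma lamB x y z : lam x (y - z) = lam x y - lam x z.
Proof. by rewrite lamD lamN. Qed.

Lemma mul_lam x y : mul x y = x + lam x y.
Proof. by rewrite /lam addrA addrN add0r. Qed.

Lemma lamM x y z : lam (mul x y) z = lam x (lam y z).
Proof.
rewrite -[lam y z]/(- y + mul y z) lamD lamN /lam -bmulA !opprD opprK.
by rewrite !addrA [x - _]addrC addrK.
Qed.

Lemma lam0x z : lam 0 z = z.
Proof. by rewrite /lam -bid0 bmul1x bid0 oppr0 add0r. Qed.

Lemma lamVK x z : lam (binv B x) (lam x z) = z.
Proof. by rewrite -lamM bmulVx bid0 lam0x. Qed.

Lemma lamKV x z : lam x (lam (binv B x) z) = z.
Proof. by rewrite -lamM bmulxV bid0 lam0x. Qed.

Lemma bstar_lam x y : bstar B x y = lam x y - y.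
Proof. by []. Qed.

Lemma bstarB x y z : bstar B x (y - z) = bstar B x y - bstar B x z.
Proof. by rewrite !bstar_lam lamB !opprD !opprK addrACA. Qed.

Lemma bstar0 x : bstar B x 0 = 0.
Proof. by rewrite bstar_lam lam0 subrr. Qed.

End LambdaMap.

Section RightNilpotentOfClassTwo.
Variables (A : zmodType) (B : left_brace A).
Hypothesis rser3_trivial : forall x, rser B 3 x <-> x = 0.

(* (x*y)*z = 0 for all z, i.e. lambda_(x*y) is the identity. *)
Lemma lam_star x y z : lam B (bstar B x y) z = z.
Proof.
have : bstar B (bstar B x y) z = 0.
  apply/rser3_trivial; apply: addgen_gen; exists (bstar B x y), z; split=> //.
  by apply: addgen_gen; exists x, y.
by rewrite bstar_lam => /eqP; rewrite subr_eq0 => /eqP.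
Qed.

(* lambda is additive: writing x + y = x . y' with y' = lambda_x^-1(y), and
   y = (x*y') . y', the factor x*y' acts trivially. *)
Lemma lam_add x y w : lam B (x + y) w = lam B x (lam B y w).
Proof.
set y' := lam B (binv B x) y.
have lam_y' : lam B x y' = y by rewrite lamKV.
have -> : x + y = bmul B x y' by rewrite mul_lam lam_y'.
rewrite lamM; congr (lam B x _).
set k := bstar B x y'.
have -> : y = k + y' by rewrite /k bstar_lam lam_y' subrK.
have -> : k + y' = bmul B k y' by rewrite mul_lam lam_star.
by rewrite lamM lam_star.
Qed.

Lemma lam_lamN x z : lam B (- x) (lam B x z) = z.
Proof. by rewrite -lam_add addNr lam0x. Qed.

End RightNilpotentOfClassTwo.

Lemma zmod_closedD (A : zmodType) (P : A -> Prop) :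
  P 0 -> (forall x y, P x -> P y -> P (x - y)) ->
  forall z w, P z -> P w -> P (z + w).
Proof.
move=> P0 PB z w hz hw; rewrite -[w]opprK -[- w]sub0r.
by apply: (PB) => //; apply: PB.
Qed.

Lemma zmod_closed_mulrz (A : zmodType) (P : A -> Prop) :
  P 0 -> (forall x y, P x -> P y -> P (x - y)) ->
  forall z (n : int), P z -> P (z *~ n).
Proof.
move=> P0 PB; have PD := zmod_closedD P0 PB.
have Pnat z j : P z -> P (z *+ j).
  by move=> hz; elim: j => [|j IH]; rewrite ?mulr0n // mulrS; apply: PD.
move=> z [] j hz; first by rewrite -pmulrn; apply: Pnat.
by rewrite NegzE mulrNz -pmulrn -sub0r; apply: PB => //; apply: Pnat.
Qed.

Section Spans.
Variables (A : zmodType) (B : left_brace A) (m : nat) (a : A).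
Hypothesis lser_trivial : forall x, lser B (@fullset A) m.+1 x <-> x = 0.

Local Notation as_ := (aseq B a).
Local Notation V := (Sr B a m).

Lemma aseqS k : as_ k.+2 = bstar B a (as_ k.+1).
Proof. by []. Qed.

Lemma aseq_lser k : lser B (@fullset A) k.+1 (as_ k.+1).
Proof.
elim: k => [|k IH] //=.
by apply: addgen_gen; exists a, (as_ k.+1).
Qed.

Lemma aseq_big k : (m.+1 <= k)%N -> as_ k = 0.
Proof.
elim: k => [//|k IH].
rewrite leq_eqVlt => /orP [/eqP <-|]; first by apply/lser_trivial/aseq_lser.
rewrite ltnS => hk; case: k hk IH => [//|k] hk IH.
by rewrite aseqS IH // bstar0.
Qed.

Lemma V0 r : V r 0.
Proof. by exists (fun _ => 0); rewrite big1 // => i _; rewrite mulr0z. Qed.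

Lemma VB r x y : V r x -> V r y -> V r (x - y).
Proof.
move=> [t1 ->] [t2 ->]; exists (fun k => t1 k - t2 k).
by rewrite -sumrB; apply: eq_bigr => i _; rewrite mulrzBr.
Qed.

Lemma VN r x : V r x -> V r (- x).
Proof. by move=> h; rewrite -sub0r; apply: VB => //; apply: V0. Qed.

Lemma VD r x y : V r x -> V r y -> V r (x + y).
Proof. by move=> hx hy; rewrite -[y]opprK; apply: VB => //; apply: VN. Qed.

Lemma Vgen r k : (r <= k <= m)%N -> V r (as_ k).
Proof.
move=> /andP [hrk hkm]; exists (fun i => (i == k)%:Z).
rewrite (bigD1_seq k) /=; last by rewrite iota_uniq.
  by rewrite eqxx mulr1z big1 ?addr0 // => i /negbTE ->; rewrite mulr0z.
by rewrite mem_index_iota hrk ltnS.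
Qed.

Lemma Vgen_ge r k : (r <= k)%N -> V r (as_ k).
Proof.
move=> hrk; case: (leqP k m) => hkm; last by rewrite aseq_big //; apply: V0.
by apply: Vgen; rewrite hrk.
Qed.

Lemma Vind (P : A -> Prop) r :
  P 0 -> (forall x y, P x -> P y -> P (x - y)) ->
  (forall k, (r <= k <= m)%N -> P (as_ k)) -> forall x, V r x -> P x.
Proof.
move=> P0 PB Pgen x [t ->].
rewrite big_nat_cond; apply: (big_ind P) => //.
  exact: (zmod_closedD P0 PB).
move=> i /andP [/andP [h1 h2] _]; apply: zmod_closed_mulrz => //.
by apply: Pgen; rewrite h1 -ltnS h2.
Qed.

Lemma Vmono r s x : (r <= s)%N -> V s x -> V r x.
Proof.
move=> hrs; apply: Vind; [exact: V0 | exact: VB |].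
by move=> k /andP [hk hkm]; apply: Vgen; rewrite (leq_trans hrs hk).
Qed.

Lemma Vbig r x : (m.+1 <= r)%N -> V r x <-> x = 0.
Proof.
move=> hr; split; last by move=> ->; apply: V0.
by move=> [t ->]; rewrite big_geq.
Qed.

Lemma bstar_V r y : (1 <= r)%N -> V r y -> V r.+1 (bstar B a y).
Proof.
move=> hr; move: y; apply: Vind.
- by rewrite bstar0; apply: V0.
- by move=> x y hx hy; rewrite bstarB; apply: VB.
move=> [|k] /andP [hk _]; first by move: (leq_trans hr hk).
by rewrite -aseqS; apply: Vgen_ge.
Qed.

End Spans.

Section ActionOfMultiples.
Variables (A : zmodType) (B : left_brace A) (m : nat) (a : A).
Hypothesis rser3_trivial : forall x, rser B 3 x <-> x = 0.
Hypothesis lser_trivial : forall x, lser B (@fullset A) m.+1 x <-> x = 0.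

Local Notation as_ := (aseq B a).
Local Notation V := (Sr B a m).
Local Notation lam := (lam B).

(* Apply lambda_(-a), the inverse of lambda_a, to
   a_(k+2) = lambda_a(a_(k+1)) - a_(k+1). *)
Lemma lamNa_step k : lam (- a) (as_ k.+1) = as_ k.+1 - lam (- a) (as_ k.+2).
Proof.
by rewrite aseqS bstar_lam lamB (lam_lamN rser3_trivial) opprB addrC subrK.
Qed.

(* lambda_(-a)(a_k) lies in V k, by downward induction from a_(m+1) = 0;
   d bounds the number of steps needed. *)
Lemma lamNa_aseq d k : (m.+1 <= k.+1 + d)%N -> V k.+1 (lam (- a) (as_ k.+1)).
Proof.
elim: d k => [|d IH] k hk.
  by rewrite addn0 in hk; rewrite (aseq_big a lser_trivial) // lam0; apply: V0.
rewrite lamNa_step; apply: VB; first by apply: (Vgen_ge a lser_trivial).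
by apply: (Vmono (leqnSn k.+1)); apply: IH; rewrite addSnnS.
Qed.

Lemma lamNa_V r w : (1 <= r)%N -> V r w -> V r.+1 (lam (- a) w - w).
Proof.
move=> hr; move: w; apply: Vind.
- by rewrite lam0 subrr; apply: V0.
- move=> x y hx hy; rewrite lamB.
  suff -> : lam (- a) x - lam (- a) y - (x - y)
          = (lam (- a) x - x) - (lam (- a) y - y) by apply: VB.
  by rewrite !opprD !opprK addrACA.
move=> [|k] /andP [hk _]; first by move: (leq_trans hr hk).
rewrite lamNa_step addrAC subrr add0r; apply: VN.
apply: (Vmono (s := k.+2)) => //; apply: (lamNa_aseq (d := m)).
by rewrite addSn ltnS leq_addl.
Qed.

(* If lambda_u - id maps V_r into V_(r+1), so does lambda_(nu) - id,
   since lambda_(nu) is the n-th iterate of lambda_u. *)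
Lemma lam_mulrn_V r u (n : nat) :
  (forall w, V r w -> V r.+1 (lam u w - w)) ->
  forall y, V r y -> V r.+1 (lam (u *+ n) y - y).
Proof.
move=> hu y hy; elim: n => [|n IH]; first by rewrite mulr0n lam0x subrr; apply: V0.
rewrite mulrS (lam_add rser3_trivial); set w := lam (u *+ n) y.
have hw : V r w.
  by rewrite -(subrK y w); apply: VD => //; apply: (Vmono (leqnSn r)).
by rewrite -(subrK w (lam u w)) -addrA; apply: VD => //; apply: hu.
Qed.

Lemma lam_mulrz_V r y (n : int) : (1 <= r)%N -> V r y -> V r.+1 (lam (a *~ n) y - y).
Proof.
move=> hr hy; case: n => j.
  rewrite -pmulrn; apply: lam_mulrn_V => // w.
  by rewrite -bstar_lam; apply: (bstar_V lser_trivial).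
rewrite NegzE mulrNz -pmulrn -mulNrn.
by apply: lam_mulrn_V => // w; apply: lamNa_V.
Qed.

Lemma lam_mulrz_stable r y (n : int) : (1 <= r)%N -> V r y -> V r (lam (a *~ n) y).
Proof.
move=> hr hy; rewrite -(subrK y (lam _ _)); apply: VD => //.
by apply: (Vmono (leqnSn r)); apply: lam_mulrz_V.
Qed.

Lemma lam_mulrzNK (n : int) z : lam (a *~ n) (lam (a *~ (- n)) z) = z.
Proof. by rewrite -(lam_add rser3_trivial) mulrNz addrN lam0x. Qed.

(* Every element of V_1 acts as some multiple of a: lambda is additive,
   lambda_(a_1) = lambda_a and lambda_(a_k) = id for k >= 2. *)
Lemma V1_lam x : V 1 x -> exists n : int, forall z, lam x z = lam (a *~ n) z.
Proof.
move: x; apply: Vind.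
- by exists 0 => z; rewrite mulr0z.
- move=> x1 y1 [n1 h1] [n2 h2]; exists (n1 - n2) => z.
  rewrite (lam_add rser3_trivial) -{1}(lam_mulrzNK n2 z) -h2.
  rewrite (lam_lamN rser3_trivial) h1.
  by rewrite -(lam_add rser3_trivial) -mulrzDr.
move=> [//|[|k]] _; first by exists 1 => z; rewrite mulr1z.
by exists 0 => z; rewrite mulr0z lam0x aseqS lam_star.
Qed.

Lemma star_V r x y : (1 <= r)%N -> V 1 x -> V r y -> V r.+1 (bstar B x y).
Proof.
move=> hr hx hy; have [n hn] := V1_lam hx.
by rewrite bstar_lam hn; apply: lam_mulrz_V.
Qed.

(* V_1 is a subbrace: products x.y = x + lambda_x(y) and inverses
   x^-1 = lambda_(x^-1)(-x) stay in V_1 since each lambda_x preserves it. *)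
Lemma V1_subbrace : is_subbrace B (V 1).
Proof.
split; first exact: V0.
split; first exact: VB.
split; first by rewrite bid0; apply: V0.
split.
  move=> x y hx hy; rewrite mul_lam; apply: VD => //.
  by have [n ->] := V1_lam hx; apply: lam_mulrz_stable.
move=> x hx; have [n hn] := V1_lam hx.
have lam_inv : lam x (binv B x) = - x.
  by apply/eqP; rewrite -addr_eq0 addrC -mul_lam bmulxV bid0.
have inv_lam : binv B x = lam (binv B x) (- x) by rewrite -lam_inv lamVK.
have lam_inv_mulrz u : lam (binv B x) u = lam (a *~ (- n)) u.
  by rewrite -{1}(lam_mulrzNK n u) -hn lamVK.
by rewrite inv_lam lam_inv_mulrz; apply: lam_mulrz_stable => //; apply: VN.
Qed.

Local Notation G := (gen_subbrace B a).

Lemma gen_aseq k : G (as_ k.+1).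
Proof.
elim: k => [|k IH] T hT ha //.
have [_ [TB [_ [TM _]]]] := hT.
have -> : as_ k.+2 = bmul B a (as_ k.+1) - a - as_ k.+1.
  by rewrite aseqS /bstar [- a + _]addrC.
by apply: (TB); [apply: (TB); [apply: (TM); [|apply: IH]|]|apply: IH].
Qed.

Lemma gen_V1 x : G x <-> V 1 x.
Proof.
split=> [hx|].
  by apply: hx; [exact: V1_subbrace | exact: (Vgen_ge a lser_trivial (leqnn 1))].
move: x; apply: Vind.
- by move=> T [T0 _].
- move=> x y hx hy T hT ha; have [_ [TB _]] := hT.
  by apply: TB; [apply: hx | apply: hy].
by move=> [|k] // _; apply: gen_aseq.
Qed.

(* S^(r+1) = V_(r+1): the inclusion S * V_r <= V_(r+1) is star_V, and
   conversely a_(k+2) = a * a_(k+1) with a_(k+1) in V_(r+1) by induction. *)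
Lemma lser_gen r x : lser B G r.+1 x <-> V r.+1 x.
Proof.
elim: r x => [|r IH] x; first exact: gen_V1.
change (starset B G (lser B G r.+1) x <-> V r.+2 x); split.
  elim=> [z [l [y [hl [hy ->]]]]| |z w _ hz _ hw].
  - by apply: star_V => //; [apply/gen_V1 | apply/IH].
  - exact: V0.
  - exact: VB.
move: x; apply: Vind; [exact: addgen_0 | by move=> ? ? ? ?; apply: addgen_sub |].
move=> [|[|k]] // /andP [hk _]; apply: addgen_gen; exists a, (as_ k.+1).
split; first exact: (gen_aseq 0).
by split => //; apply/IH; apply: (Vgen_ge a lser_trivial).
Qed.

End ActionOfMultiples.

Theorem mainTheorem14 (A : zmodType) (B : left_brace A) (m : nat) (hm : (2 <= m)%N)
  (h3 : forall x, rser B 3 x <-> x = 0)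
  (hm1 : forall x, lser B (@fullset A) m.+1 x <-> x = 0)
  (a : A) :
  (forall r : nat, (1 <= r <= m)%N ->
     forall x, lser B (gen_subbrace B a) r x <-> Sr B a m r x) /\
  (forall r : nat, (m.+1 <= r)%N ->
     forall x, lser B (gen_subbrace B a) r x <-> x = 0).
Proof.
split=> [[|r] // _ x | [|r] // hr x]; first exact: lser_gen.
exact: iff_trans (lser_gen a h3 hm1 r x) (Vbig B a x hr).
Qed.
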